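(* Let $\mathbb{X}$ be a finite set, $\mathcal{H}_A$ a finite-dimensional Hilbert space, and $\{\rho_A^x\}_{x\in\mathbb{X}}$ density operators on $\mathcal{H}_A$. Then \[ \mathcal{Q}(X\rightarrow A)_{\rho_A}\leq\mathcal{B}(X\rightarrow A)_{\rho_A}\leq\mathcal{R}(X\rightarrow A)_{\rho_A}. \]
   Context: All logarithms are base 2. $\Delta(\mathbb{X})$ is the set of probability mass functions on $\mathbb{X}$. For a density operator $\rho$ and positive semi-definite $\sigma$, $\widetilde{D}_\infty(\rho\|\sigma)=\log\big(\inf\{\mu\in\mathbb{R}:\rho\leq\mu\sigma\}\big)$ ($+\infty$ if the support of $\rho$ is not contained in that of $\sigma$). Maximal quantum leakage: $\mathcal{Q}(X\rightarrow A)_{\rho_A}=\sup_{\{F_y\}_{y\in\mathbb{Y}}}\log\big(\sum_{y\in\mathbb{Y}}\max_{x\in\mathbb{X}}\operatorname{tr}(\rho_A^xF_y)\big)$, the supremum over all POVMs on $\mathcal{H}_A$ with arbitrary finite outcome set $\mathbb{Y}$. Barycentric quantum Rényi leakage: $\mathcal{B}(X\rightarrow A)_{\rho_A}=\min_{\pi\in\Delta(\mathbb{X})}\max_{x\in\mathbb{X}}\widetilde{D}_\infty\big(\rho_A^x\,\|\,\sum_{x'}\pi(x')\rho_A^{x'}\big)$. Pairwise quantum Rényi leakage: $\mathcal{R}(X\rightarrow A)_{\rho_A}=\max_{x,x'\in\mathbb{X}}\widetilde{D}_\infty(\rho_A^x\|\rho_A^{x'})$. *)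

From mathcomp Require Import all_boot all_order all_algebra.
From mathcomp Require Import all_classical all_reals all_analysis.
From mathcomp Require Import complex.
Set Implicit Arguments. Unset Strict Implicit. Unset Printing Implicit Defensive.
Import Order.TTheory GRing.Theory Num.Theory.
Local Open Scope ring_scope.
Local Open Scope classical_set_scope.
Local Open Scope complex_scope.
Local Open Scope ring_scope.

(* A finite-dimensional Hilbert space H_A is C^n, C = R[i] (R : realType);
   operators on it are n x n complex matrices. *)

Definition log2 {R : realType} (x : R) : R := ln x / ln 2.

Definition adj {R : realType} {m n : nat} (A : 'M[R[i]]_(m, n)) : 'M[R[i]]_(n, m) :=
  map_mx Num.conj A^T.

(* positive semi-definite: <v, A v> >= 0 for every vector v
   (in the order of the numClosedField R[i], this means real and nonnegative) *)
Definition psd {R : realType} {n : nat} (A : 'M[R[i]]_n) : Prop :=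
  forall v : 'cV[R[i]]_n, 0 <= (adj v *m A *m v) ord0 ord0.

Definition loewner_le {R : realType} {n : nat} (A B : 'M[R[i]]_n) : Prop :=
  psd (B - A).

Definition density {R : realType} {n : nat} (rho : 'M[R[i]]_n) : Prop :=
  psd rho /\ \tr rho = 1.

(* POVM with outcome set 'I_m (every finite outcome set is in bijection with some 'I_m) *)
Definition povm {R : realType} {n m : nat} (F : 'I_m -> 'M[R[i]]_n) : Prop :=
  (forall y, psd (F y)) /\ \sum_(y < m) F y = 1%:M.

(* max-relative (sandwiched Renyi infinity) divergence:
   log (inf {mu in R : rho <= mu sigma}), +oo if this set is empty
   (which happens exactly when supp rho is not contained in supp sigma). *)
Definition Dinf {R : realType} {n : nat} (rho sigma : 'M[R[i]]_n) : \bar R :=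
  let S := [set mu : R | loewner_le rho (mu%:C *: sigma)] in
  if `[< S != set0 >] then ((log2 (inf S))%:E)%E else (+oo)%E.

Definition maxQleak {R : realType} {X : finType} {n : nat}
    (rho : X -> 'M[R[i]]_n) : \bar R :=
  ereal_sup [set v : \bar R | exists (m : nat) (F : 'I_m -> 'M[R[i]]_n),
     povm F /\
     v = ((log2 (\sum_(y < m) \big[Num.max/0]_(x : X)
                     complex.Re (\tr (rho x *m F y))))%:E)%E].

Definition pmf {R : realType} {X : finType} (pi : X -> R) : Prop :=
  (forall x, 0 <= pi x) /\ \sum_(x : X) pi x = 1.

Definition baryQleak {R : realType} {X : finType} {n : nat}
    (rho : X -> 'M[R[i]]_n) : \bar R :=
  ereal_inf [set v : \bar R | exists pi : X -> R, pmf pi /\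
     v = (\big[Order.max/-oo]_(x : X)
             Dinf (rho x) (\sum_(x' : X) (pi x')%:C *: rho x'))%E].

Definition pairQleak {R : realType} {X : finType} {n : nat}
    (rho : X -> 'M[R[i]]_n) : \bar R :=
  (\big[Order.max/-oo]_(x : X) \big[Order.max/-oo]_(x' : X) Dinf (rho x) (rho x'))%E.

From Pilot Require Import Defs.
From mathcomp Require Import all_boot all_order all_algebra.
From mathcomp Require Import all_classical all_reals all_analysis.
From mathcomp Require Import complex lra.
Set Implicit Arguments. Unset Strict Implicit. Unset Printing Implicit Defensive.
Import Order.TTheory GRing.Theory Num.Theory.
Local Open Scope complex_scope.
Local Open Scope ring_scope.

(* Let [s = sum_y max_x tr (rho x F_y)] for a POVM [F] and [sigma] a barycenter
   of the states.  If [rho x <= c sigma] for all x, then each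
   [max_x tr (rho x F_y)] is at most [c tr (sigma F_y)], since the trace of a
   product of PSD matrices is nonnegative; summing over y gives [s <= c].
   Hence no [D_inf (rho x || sigma)] can be below [log s].  For the second
   inequality, a Dirac mass [pi] at some x' has barycenter [rho x']. *)

Section PositiveSemidefinite.
Variable R : realType.
Local Notation C := R[i].

Lemma adjE m n (A : 'M[C]_(m, n)) : adj A = (A ^t* )%sesqui.
Proof. by []. Qed.

Lemma adjD m n (A B : 'M[C]_(m, n)) : adj (A + B) = adj A + adj B.
Proof. by apply/matrixP => i j; rewrite !mxE rmorphD. Qed.

Lemma adjZ m n a (A : 'M[C]_(m, n)) : adj (a *: A) = Num.conj a *: adj A.
Proof. by apply/matrixP => i j; rewrite !mxE rmorphM. Qed.

Lemma adjM m n p (A : 'M[C]_(m, n)) (B : 'M[C]_(n, p)) :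
  adj (A *m B) = adj B *m adj A.
Proof. by rewrite !adjE trmx_mul map_mxM. Qed.

Lemma adjK m n (A : 'M[C]_(m, n)) : adj (adj A) = A.
Proof. exact: trmxCK. Qed.

Definition hform n (A : 'M[C]_n) (u w : 'cV[C]_n) : C := (adj u *m A *m w) 0 0.

Lemma hformDl n (A : 'M[C]_n) u v w : hform A (u + v) w = hform A u w + hform A v w.
Proof. by rewrite /hform adjD !mulmxDl mxE. Qed.

Lemma hformDr n (A : 'M[C]_n) u v w : hform A u (v + w) = hform A u v + hform A u w.
Proof. by rewrite /hform !mulmxDr mxE. Qed.

Lemma hformZl n (A : 'M[C]_n) a u w : hform A (a *: u) w = Num.conj a * hform A u w.
Proof. by rewrite /hform adjZ -!scalemxAl mxE. Qed.

Lemma hformZr n (A : 'M[C]_n) a u w : hform A u (a *: w) = a * hform A u w.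
Proof. by rewrite /hform -!scalemxAr mxE. Qed.

Lemma hform_delta n (A : 'M[C]_n) i j : hform A (delta_mx i 0) (delta_mx j 0) = A i j.
Proof.
have adj_delta : adj (delta_mx i 0 : 'cV[C]_n) = delta_mx 0 i.
  by apply/matrixP => a b; rewrite !mxE; case: (b == i); case: (a == 0);
    rewrite ?rmorph1 ?rmorph0.
by rewrite /hform adj_delta -rowE -colE !mxE.
Qed.

Lemma psd_diag_ge0 n (A : 'M[C]_n) i : psd A -> 0 <= A i i.
Proof. by move=> hA; rewrite -hform_delta; apply: hA. Qed.

Lemma psd_adj n (A : 'M[C]_n) : psd A -> adj A = A.
Proof.
move=> hA; apply/matrixP => i j; rewrite !mxE.
set u : 'cV[C]_n := delta_mx i 0; set w : 'cV[C]_n := delta_mx j 0.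
(* Polarization: positivity on [u + w] and [u + 'i w] forces [A j i = conj (A i j)]. *)
have hAv v : 0 <= hform A v v := hA v.
move: (hAv (u + w)) (hAv (u + 'i *: w)) (hAv u) (hAv w).
rewrite !hformDl !hformDr !hformZl !hformZr !hform_delta.
case: (A i i) => [a b]; case: (A j j) => [c d]; case: (A i j) => [e f];
  case: (A j i) => [g h].
rewrite !lecE /= => /andP[/eqP e1 _] /andP[/eqP e2 _] /andP[/eqP e3 _] /andP[/eqP e4 _].
by apply/eqP; rewrite eq_complex /=; apply/andP; split; apply/eqP; lra.
Qed.

Lemma psd_conj n (A Q : 'M[C]_n) : psd A -> psd (adj Q *m A *m Q).
Proof. by move=> hA v; have := hA (Q *m v); rewrite adjM !mulmxA. Qed.

(* Diagonalize [B = P^* D P] unitarily: [tr (A B) = sum_i (P A P^* )_ii d_i],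
   a sum of products of diagonal entries of PSD matrices. *)
Lemma psd_trM_ge0 n (A B : 'M[C]_n) : psd A -> psd B -> 0 <= \tr (A *m B).
Proof.
move=> hA hB.
have /orthomx_spectralP defB : B \is normalmx.
  by apply/normalmxP; rewrite -adjE psd_adj.
set P := spectralmx B in defB; set d := spectral_diag B in defB.
rewrite invmx_unitary ?spectral_unitarymx // -adjE in defB.
have PP : P *m adj P = 1%:M by apply/unitarymxP/spectral_unitarymx.
have defD : diag_mx d = adj (adj P) *m B *m adj P.
  by rewrite adjK defB !mulmxA PP mul1mx -mulmxA PP mulmx1.
have -> : \tr (A *m B) = \tr (adj (adj P) *m A *m adj P *m diag_mx d).
  by rewrite defB adjK !mulmxA mxtrace_mulC !mulmxA.
rewrite mul_mx_diag; apply: sumr_ge0 => i _; rewrite mxE.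
apply: mulr_ge0; first exact/psd_diag_ge0/psd_conj.
have -> : d 0 i = diag_mx d i i by rewrite mxE eqxx mulr1n.
by rewrite defD; apply/psd_diag_ge0/psd_conj.
Qed.

Lemma psdD n (A B : 'M[C]_n) : psd A -> psd B -> psd (A + B).
Proof. by move=> hA hB v; rewrite mulmxDr mulmxDl mxE addr_ge0. Qed.

Lemma psdZ n (A : 'M[C]_n) (c : R) : 0 <= c -> psd A -> psd (c%:C *: A).
Proof.
move=> hc hA v; rewrite -scalemxAr -scalemxAl mxE.
by apply: mulr_ge0 (hA v); rewrite ler0c.
Qed.

Lemma Re_ge0 (z : C) : 0 <= z -> 0 <= complex.Re z.
Proof. by rewrite lecE => /andP[]. Qed.

Lemma loewner_le_Re_trM n (A B F : 'M[C]_n) : loewner_le A B -> psd F ->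
  complex.Re (\tr (A *m F)) <= complex.Re (\tr (B *m F)).
Proof.
move=> hAB hF; have := Re_ge0 (psd_trM_ge0 hAB hF).
by rewrite mulmxBl raddfB raddfB /= subr_ge0.
Qed.

Lemma loewner_le_scale n (A S : 'M[C]_n) (mu c : R) : psd S -> mu <= c ->
  loewner_le A (mu%:C *: S) -> loewner_le A (c%:C *: S).
Proof.
move=> hS hmuc hA; rewrite /loewner_le.
have -> : c%:C *: S - A = (mu%:C *: S - A) + (c - mu)%:C *: S.
  by rewrite rmorphB /= scalerBl [RHS]addrC -addrA addKr.
by apply: psdD hA (psdZ _ hS); rewrite subr_ge0.
Qed.

Lemma Dinf_lt_log2 n (A S : 'M[C]_n) (s : R) : 0 < s ->
  (Dinf A S < (log2 s)%:E)%E -> exists2 mu, loewner_le A (mu%:C *: S) & mu < s.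
Proof.
move=> s_gt0; rewrite /Dinf.
case: asboolP => [/set0P M0|_]; last by rewrite ltNge leey.
rewrite lte_fin => hlog; apply: inf_lt => //; rewrite ltNge; apply/negP => hs.
have ln2_gt0 : 0 < ln (2 : R) by apply: ln_gt0; lra.
move: hlog; rewrite ltNge /log2 ler_pM2r ?invr_gt0 // ler_ln ?posrE ?hs //.
exact: lt_le_trans hs.
Qed.

End PositiveSemidefinite.

Section Leakage.
Variables (R : realType) (X : finType) (n : nat).
Local Notation C := R[i].
Implicit Types (rho : X -> 'M[C]_n) (pi : X -> R).

Definition barycenter pi rho : 'M[C]_n := \sum_(x : X) (pi x)%:C *: rho x.

Definition guessing_sum rho m (F : 'I_m -> 'M[C]_n) : R :=
  \sum_(y < m) \big[Num.max/0]_(x : X) complex.Re (\tr (rho x *m F y)).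

Lemma povm_sum_Re_trM m (F : 'I_m -> 'M[C]_n) (S : 'M[C]_n) : povm F ->
  \sum_(y < m) complex.Re (\tr (S *m F y)) = complex.Re (\tr S).
Proof. by case=> _ hF; rewrite -raddf_sum /= -raddf_sum /= -mulmx_sumr hF mulmx1. Qed.

Lemma guessing_sum_ge1 rho m (F : 'I_m -> 'M[C]_n) x0 :
  density (rho x0) -> povm F -> 1 <= guessing_sum rho F.
Proof.
move=> [_ tr1] hF; rewrite -[1]/(complex.Re 1) -tr1 -(povm_sum_Re_trM _ hF).
by apply: ler_sum => y _; apply: (le_bigmax _ (fun x => complex.Re _) x0).
Qed.

Lemma guessing_sum_le rho m (F : 'I_m -> 'M[C]_n) (sigma : 'M[C]_n) (c : R) :
  povm F -> psd sigma -> \tr sigma = 1 -> 0 <= c ->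
  (forall x, loewner_le (rho x) (c%:C *: sigma)) -> guessing_sum rho F <= c.
Proof.
move=> hF hsig tr1 c_ge0 hc.
have hcsig := psdZ c_ge0 hsig.
apply: le_trans (_ : \sum_(y < m) complex.Re (\tr (c%:C *: sigma *m F y)) <= _).
  apply: ler_sum => y _; apply: bigmax_le => [|x _].
    exact/Re_ge0/psd_trM_ge0/(proj1 hF y).
  exact: loewner_le_Re_trM (hc x) (proj1 hF y).
by rewrite povm_sum_Re_trM // mxtraceZ tr1 mulr1.
Qed.

Lemma psd_barycenter pi rho :
  Defs.pmf pi -> (forall x, psd (rho x)) -> psd (barycenter pi rho).
Proof.
move=> [pi_ge0 _] hrho; apply: big_ind => [v||x _].
- by rewrite mulmx0 mul0mx mxE.
- exact: psdD.
- exact: psdZ.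
Qed.

Lemma tr_barycenter pi rho : Defs.pmf pi -> (forall x, \tr (rho x) = 1) ->
  \tr (barycenter pi rho) = 1.
Proof.
move=> [_ pi1] tr1; rewrite raddf_sum /=.
under eq_bigr => x _ do rewrite mxtraceZ tr1 mulr1.
by rewrite -rmorph_sum /= pi1.
Qed.

Lemma pmf_dirac (x0 : X) : Defs.pmf (fun x => (x == x0)%:R : R).
Proof.
split=> [x|]; first exact: ler0n.
by rewrite (bigD1 x0) //= eqxx big1 ?addr0 // => x /negbTE ->.
Qed.

Lemma barycenter_dirac rho (x0 : X) :
  barycenter (fun x => (x == x0)%:R) rho = rho x0.
Proof.
rewrite /barycenter (bigD1 x0) //= eqxx rmorph1 scale1r big1 ?addr0 //.
by move=> x /negbTE ->; rewrite rmorph0 scale0r.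
Qed.

Lemma log2_guessing_sum_le_Dinf rho m (F : 'I_m -> 'M[C]_n) (sigma : 'M[C]_n) x0 :
  density (rho x0) -> povm F -> psd sigma -> \tr sigma = 1 ->
  ((log2 (guessing_sum rho F))%:E <= \big[Order.max/-oo]_(x : X) Dinf (rho x) sigma)%E.
Proof.
move=> hrho0 hF hsig tr1; set s := guessing_sum rho F.
have s_gt0 : 0 < s := lt_le_trans ltr01 (guessing_sum_ge1 hrho0 hF).
rewrite leNgt; apply/negP => hlt.
have /fin_all_exists[mu hmu] :
    forall x, exists mu : R, loewner_le (rho x) (mu%:C *: sigma) /\ mu < s.
  move=> x; have [mux] := Dinf_lt_log2 s_gt0 (le_lt_trans (le_bigmax _ _ x) hlt).
  by exists mux.
have : s <= \big[Num.max/0]_(x : X) mu x.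
  apply: (guessing_sum_le hF hsig tr1 (bigmax_ge_id _ _ _ _)) => x.
  exact: loewner_le_scale hsig (le_bigmax _ _ x) (proj1 (hmu x)).
by rewrite leNgt (bigmax_lt _ s_gt0) // => x _; case: (hmu x).
Qed.

End Leakage.

Theorem corollary2 (R : realType) (X : finType) (n : nat)
    (rho : X -> 'M[R[i]]_n)
    (hX : (0 < #|X|)%N)
    (hrho : forall x, density (rho x)) :
  (maxQleak rho <= baryQleak rho <= pairQleak rho)%E.
Proof.
have [x0 _] := card_gt0P hX.
have psd_rho x := proj1 (hrho x); have tr_rho x := proj2 (hrho x).
apply/andP; split.
- apply: ge_ereal_sup => _ [m [F [hF ->]]]; apply/ereal_infP => _ [pi [hpi ->]].
  apply: (log2_guessing_sum_le_Dinf (hrho x0) hF).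
    exact: psd_barycenter hpi psd_rho.
  exact: tr_barycenter hpi tr_rho.
- apply: (@le_trans _ _ (\big[Order.max/-oo]_(x : X) Dinf (rho x) (rho x0))%E).
    apply: ereal_inf_lbound; exists (fun x => (x == x0)%:R).
    split; first exact: pmf_dirac.
    by have := barycenter_dirac rho x0; rewrite /barycenter => ->.
  apply: le_bigmax2 => x _.
  exact: (le_bigmax _ (fun x' => Dinf (rho x) (rho x')) x0).
Qed.
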